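(* For every integer $k \geq 1$, let $\mathcal{b}(k)$ denote the greatest common divisor of all the sums $\sum_{i=1}^{k} b_{n+i}$, $n \geq 0$. Then $$\mathcal{b}(k) = \begin{cases} \gcd(P_k, k), & \text{if } k \text{ is even};\\ 2\gcd(Q_k, k), & \text{if } k \text{ is odd}.\end{cases}$$
   Context: The Pell sequence $(P_n)_{n\ge0}$ is defined by $P_0=0$, $P_1=1$, $P_n = 2P_{n-1}+P_{n-2}$. The associated Pell sequence $(Q_n)_{n\ge0}$ is defined by $Q_0=1$, $Q_1=1$, $Q_n=2Q_{n-1}+Q_{n-2}$. The cobalancing sequence $(b_n)_{n\ge0}$ is defined by $b_0=0$, $b_1=0$, $b_n=6b_{n-1}-b_{n-2}+2$. *)

From mathcomp Require Import all_boot.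
Set Implicit Arguments. Unset Strict Implicit. Unset Printing Implicit Defensive.

Fixpoint pell (n : nat) : nat :=
  match n with
  | 0 => 0
  | 1 => 1
  | (m.+1 as m1).+1 => 2 * pell m1 + pell m
  end.

Fixpoint qpell (n : nat) : nat :=
  match n with
  | 0 => 1
  | 1 => 1
  | (m.+1 as m1).+1 => 2 * qpell m1 + qpell m
  end.

(* cobalancing numbers b_0 = 0, b_1 = 0, b_n = 6 b_(n-1) - b_(n-2) + 2
   (the sequence is nondecreasing, so truncated subtraction is harmless;
    we nonetheless write it as 6 b_(n-1) + 2 - b_(n-2)) *)
Fixpoint cobal (n : nat) : nat :=
  match n with
  | 0 => 0
  | 1 => 0
  | (m.+1 as m1).+1 => 6 * cobal m1 + 2 - cobal m
  end.

Definition cobal_window (k n : nat) : nat := \sum_(1 <= i < k.+1) cobal (n + i).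

Definition is_gcd_family (f : nat -> nat) (d : nat) : Prop :=
  (forall n, d %| f n) /\ (forall e, (forall n, e %| f n) -> e %| d).

From mathcomp Require Import all_boot zify.
Set Implicit Arguments. Unset Strict Implicit. Unset Printing Implicit Defensive.

(* Since 2 b_(m+1) + 1 = P_(2m+1), the window sums S_n = b_(n+1) + ... + b_(n+k)
   telescope to 4 S_n + 2k + P_(2n) = P_(2n+2k), and the Pell addition formulas
   turn this into 2 S_n + k = X Y_(2n+k), where (X, Y) = (P_k, Q) for k even and
   (Q_k, P) for k odd.  Hence S_(n+1) - S_n = X Y_(2n+k+1), and since
   gcd (Y_(k+1), Y_(k+3)) = gcd (Y_(k+1), 2), every common divisor of the S_n
   divides gcd (X, k) * gcd (Y_(k+1), 2).  Conversely gcd (X, k) divides S_n: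
   for k even because P_k and k have the same 2-adic valuation, for k odd
   because Q_k = k and P_(2n+k) = 1 modulo 4. *)

Lemma pellSS n : pell n.+2 = 2 * pell n.+1 + pell n. Proof. by []. Qed.
Lemma qpellSS n : qpell n.+2 = 2 * qpell n.+1 + qpell n. Proof. by []. Qed.

Lemma pell_qpellS n :
  pell n.+1 = pell n + qpell n /\ qpell n.+1 = qpell n + 2 * pell n.
Proof. by elim: n => [|n [IHp IHq]] //; rewrite pellSS qpellSS IHp IHq; lia. Qed.

Lemma pellS n : pell n.+1 = pell n + qpell n. Proof. by case: (pell_qpellS n). Qed.
Lemma qpellS n : qpell n.+1 = qpell n + 2 * pell n. Proof. by case: (pell_qpellS n). Qed.

Lemma pell_qpellD a b :
  pell (a + b) = pell a * qpell b + qpell a * pell b /\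
  qpell (a + b) = qpell a * qpell b + 2 * (pell a * pell b).
Proof.
elim: b => [|b [IHp IHq]]; first by rewrite addn0 /=; lia.
by rewrite addnS !pellS !qpellS IHp IHq; split; nia.
Qed.

Lemma pellD a b : pell (a + b) = pell a * qpell b + qpell a * pell b.
Proof. by case: (pell_qpellD a b). Qed.
Lemma qpellD a b : qpell (a + b) = qpell a * qpell b + 2 * (pell a * pell b).
Proof. by case: (pell_qpellD a b). Qed.

Lemma pell_cassini n :
  if odd n then qpell n ^ 2 + 1 = 2 * pell n ^ 2 else qpell n ^ 2 = 2 * pell n ^ 2 + 1.
Proof.
elim: n => [|n IH] //.
by rewrite pellS qpellS /=; case: (odd n) IH => /= IH; nia.
Qed.

Lemma qpell_odd n : odd (qpell n).
Proof. by elim: n => [|n IH] //; rewrite qpellS oddD oddM IH. Qed.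

Lemma pell_odd n : odd (pell n) = odd n.
Proof. by elim: n => [|n IH] //; rewrite pellS oddD IH qpell_odd /=; case: (odd n). Qed.

Lemma pell_gt0 n : 0 < n -> 0 < pell n.
Proof. by case: n => // n _; rewrite pellS ltn_addl // odd_gt0 ?qpell_odd. Qed.

Lemma logn2_pell n : logn 2 (pell n) = logn 2 n.
Proof.
elim/ltn_ind: n => n IH.
case: (boolP (odd n)) => [n_odd | n_even].
  by rewrite !logn_coprime // coprime2n ?pell_odd.
case: n IH n_even => [|n] IH n_even //.
have [m n_eq] : exists m, n.+1 = m.*2 by exists n.+1./2; rewrite (even_halfK n_even).
have m_gt0 : 0 < m by case: m n_eq.
have -> : pell n.+1 = 2 * (qpell m * pell m) by rewrite n_eq -addnn pellD; lia.
have qpell_gt0 : 0 < qpell m by rewrite odd_gt0 ?qpell_odd.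
rewrite n_eq -mul2n !lognM ?muln_gt0 ?qpell_gt0 ?pell_gt0 //.
rewrite (@logn_coprime 2 (qpell m)) ?coprime2n ?qpell_odd // IH //.
by rewrite n_eq -addnn; lia.
Qed.

Lemma pell_mod4 m : pell m.*2.+1 = 1 %[mod 4].
Proof.
elim: m => [|m IH] //.
have mid_even : ~~ odd (pell m.*2.+2) by rewrite pell_odd /= odd_double.
rewrite doubleS pellSS -(even_halfK mid_even).
have -> : 2 * (pell m.*2.+2)./2.*2 = (pell m.*2.+2)./2 * 4 by rewrite -mul2n; lia.
by rewrite modnMDl.
Qed.

Lemma qpell_mod4 m : qpell m.*2.+1 = m.*2.+1 %[mod 4].
Proof.
elim: m => [|m IH] //.
rewrite doubleS qpellSS -(odd_double_half (qpell m.*2.+2)) qpell_odd.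
set h := (qpell _)./2.
have -> : 2 * (true + h.*2) + qpell m.*2.+1 = h * 4 + (2 + qpell m.*2.+1) by lia.
by rewrite modnMDl -modnDmr IH modnDmr.
Qed.

Lemma pell_bisect_rec m : pell m.+4 + pell m = 6 * pell m.+2.
Proof. by rewrite !pellSS; lia. Qed.

Lemma cobal_pell n : 2 * cobal n.+1 + 1 = pell n.*2.+1.
Proof.
suff : 2 * cobal n.+1 + 1 = pell n.*2.+1 /\ 2 * cobal n.+2 + 1 = pell n.*2.+3 by case.
elim: n => [|n [IH1 IH2]] //; rewrite doubleS; split => //.
have rec := pell_bisect_rec n.*2.+1.
(* makes the truncated subtraction in the recurrence of [cobal] exact *)
have mono : pell n.*2.+1 <= pell n.*2.+3 by rewrite (pellSS n.*2.+1); lia.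
have -> : cobal n.+3 = 6 * cobal n.+2 + 2 - cobal n.+1 by [].
lia.
Qed.

Lemma cobal_window_pell k n :
  4 * cobal_window k n + 2 * k + pell n.*2 = pell (n.*2 + k.*2).
Proof.
rewrite /cobal_window; elim: k => [|k IH]; first by rewrite big_geq // /= !addn0 muln0.
have -> : n.*2 + k.+1.*2 = (n.*2 + k.*2).+2 by rewrite doubleS !addnS.
have -> : \sum_(1 <= i < k.+2) cobal (n + i) =
          \sum_(1 <= i < k.+1) cobal (n + i) + cobal (n + k.+1) by rewrite big_nat_recr.
rewrite pellSS -IH -doubleD.
by have := cobal_pell (n + k); rewrite -addnS; lia.
Qed.

Lemma pellD_double_odd b c :
  odd b -> pell (c + b.*2) = pell c + 2 * (pell (c + b) * qpell b).
Proof.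
move=> b_odd; have := pell_cassini b; rewrite b_odd => /(congr1 (muln (pell c))) cas.
by rewrite -addnn addnA pellD (pellD c b) (qpellD c b); nia.
Qed.

Lemma pellD_double_even b c :
  ~~ odd b -> pell (c + b.*2) = pell c + 2 * (qpell (c + b) * pell b).
Proof.
move=> /negbTE b_even; have := pell_cassini b; rewrite b_even => /(congr1 (muln (pell c))) cas.
by rewrite -addnn addnA pellD (qpellD c b) (pellD c b); nia.
Qed.

Lemma cobal_window_odd k n :
  odd k -> 2 * cobal_window k n + k = qpell k * pell (n.*2 + k).
Proof. by move=> k_odd; have := cobal_window_pell k n; rewrite pellD_double_odd //; nia. Qed.

Lemma cobal_window_even k n :
  ~~ odd k -> 2 * cobal_window k n + k = pell k * qpell (n.*2 + k).
Proof. by move=> k_even; have := cobal_window_pell k n; rewrite pellD_double_even //; nia. Qed.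

Section ClosedFormGcd.

Variables (Y f : nat -> nat) (X k : nat).
Hypothesis Y_rec : forall j, Y j.+2 = 2 * Y j.+1 + Y j.
Hypothesis Y_coprime01 : coprime (Y 0) (Y 1).

Lemma coprime_recS j : coprime (Y j) (Y j.+1).
Proof. by elim: j => // j IH; rewrite /coprime Y_rec gcdnMDl gcdnC. Qed.

Lemma gcdn_recSS j : gcdn (Y j) (Y j.+2) = gcdn (Y j) 2.
Proof. by rewrite Y_rec gcdnDr Gauss_gcdl // coprime_recS. Qed.

Hypothesis f_closed : forall n, 2 * f n + k = X * Y (n.*2 + k).

Lemma closed_formS n : f n.+1 = f n + X * Y (n.*2 + k).+1.
Proof.
by have := f_closed n.+1; rewrite doubleS !addSn Y_rec mulnDr -f_closed mulnCA; lia.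
Qed.

Lemma dvdn_gcdn_closed_form e :
  (forall n, e %| f n) -> e %| gcdn X k * gcdn (Y k.+1) 2.
Proof.
move=> e_dvd.
have step_dvd n : e %| X * Y (n.*2 + k).+1.
  by rewrite -(dvdn_addr _ (e_dvd n)) -closed_formS.
have e_dvdX : e %| X * gcdn (Y k.+1) 2.
  rewrite -gcdn_recSS muln_gcdr dvdn_gcd.
  by apply/andP; split; [exact: (step_dvd 0) | exact: (step_dvd 1)].
rewrite muln_gcdl dvdn_gcd e_dvdX /=.
have : e %| (2 * f 0 + k) * gcdn (Y k.+1) 2 by rewrite f_closed mulnAC dvdn_mulr.
by rewrite mulnDl dvdn_addr // dvdn_mulr // dvdn_mull.
Qed.

End ClosedFormGcd.

Lemma odd_divn_gcdn a b :
  0 < a -> 0 < b -> logn 2 a <= logn 2 b -> odd (a %/ gcdn a b).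
Proof.
move=> a_gt0 b_gt0 le_ab.
have d_gt0 : 0 < gcdn a b by rewrite gcdn_gt0 a_gt0.
have logn_d : logn 2 (gcdn a b) = logn 2 a.
  apply/eqP; rewrite eqn_leq dvdn_leq_log ?dvdn_gcdl //=.
  rewrite -pfactor_dvdn // dvdn_gcd pfactor_dvdnn.
  by rewrite (dvdn_trans _ (pfactor_dvdnn 2 b)) // dvdn_exp2l.
have a'_gt0 : 0 < a %/ gcdn a b by rewrite divn_gt0 // dvdn_leq // dvdn_gcdl.
rewrite -[odd _]negbK -dvdn2 -(expn1 2) pfactor_dvdn //.
by rewrite logn_div ?dvdn_gcdl // logn_d subnn.
Qed.

Lemma double_gcdn_dvd_subn a b c :
  0 < a -> 0 < b -> logn 2 a = logn 2 b -> odd c -> (gcdn a b).*2 %| a * c - b.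
Proof.
move=> a_gt0 b_gt0 eq_ab c_odd.
have a'_odd := odd_divn_gcdn a_gt0 b_gt0 (eq_leq eq_ab).
have := odd_divn_gcdn b_gt0 a_gt0 (eq_leq (esym eq_ab)); rewrite gcdnC => b'_odd.
move: a'_odd b'_odd (divnK (dvdn_gcdl a b)) (divnK (dvdn_gcdr a b)).
set d := gcdn a b; move: (a %/ d) (b %/ d) => a' b' a'_odd b'_odd <- <-.
rewrite mulnAC -mulnBl -mul2n dvdn_mul //.
by rewrite -subSS dvdn_sub // dvdn2 /= negbK // oddM a'_odd.
Qed.

Lemma gcdn_pell_dvd_cobal_window k n :
  0 < k -> ~~ odd k -> gcdn (pell k) k %| cobal_window k n.
Proof.
move=> k_gt0 k_even.
rewrite -(dvdn_pmul2l (isT : 0 < 2)) mul2n.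
have -> : 2 * cobal_window k n = pell k * qpell (n.*2 + k) - k.
  by rewrite -cobal_window_even // addnK.
by rewrite double_gcdn_dvd_subn ?pell_gt0 ?logn2_pell ?qpell_odd.
Qed.

Lemma gcdn_qpell_dvd_cobal_window k n :
  odd k -> 2 * gcdn (qpell k) k %| cobal_window k n.
Proof.
move=> k_odd; have closed := cobal_window_odd n k_odd.
set g := gcdn (qpell k) k.
have g_odd : odd g by apply: dvdn_odd k_odd; apply: dvdn_gcdr.
rewrite Gauss_dvd ?coprime2n //; apply/andP; split.
  have [h k_eq] : exists h, k = h.*2.+1.
    by exists k./2; rewrite -[LHS]odd_double_half k_odd add1n.
  have : 2 * cobal_window k n + k = 0 + k %[mod 4].
    rewrite closed -modnMm k_eq qpell_mod4 addnS -doubleD pell_mod4.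
    by rewrite modnMm muln1.
  move/eqP; rewrite eqn_modDr eqn_mod_dvd // subn0.
  by rewrite (_ : 4 = 2 * 2) // dvdn_pmul2l.
rewrite -(Gauss_dvdr _ (_ : coprime g 2)) ?coprimen2 //.
have : g %| 2 * cobal_window k n + k by rewrite closed dvdn_mulr ?dvdn_gcdl.
by rewrite dvdn_addl ?dvdn_gcdr.
Qed.

Lemma cobal_window_gcd_even k :
  0 < k -> ~~ odd k -> is_gcd_family (cobal_window k) (gcdn (pell k) k).
Proof.
move=> k_gt0 k_even; split=> [n | e e_dvd]; first exact: gcdn_pell_dvd_cobal_window.
have := dvdn_gcdn_closed_form qpellSS isT (fun n => cobal_window_even n k_even) e_dvd.
by rewrite (eqP (_ : coprime (qpell k.+1) 2)) ?muln1 // coprimen2 qpell_odd.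
Qed.

Lemma cobal_window_gcd_odd k :
  odd k -> is_gcd_family (cobal_window k) (2 * gcdn (qpell k) k).
Proof.
move=> k_odd; split=> [n | e e_dvd]; first exact: gcdn_qpell_dvd_cobal_window.
have := dvdn_gcdn_closed_form pellSS isT (fun n => cobal_window_odd n k_odd) e_dvd.
by rewrite mulnC (_ : gcdn _ 2 = 2) //; apply/gcdn_idPr; rewrite dvdn2 pell_odd /= k_odd.
Qed.

Theorem theorem28 (k : nat) : 1 <= k ->
  is_gcd_family (cobal_window k)
    (if ~~ odd k then gcdn (pell k) k else 2 * gcdn (qpell k) k).
Proof.
move=> k_gt0; case: ifP => [k_even | /negbFE k_odd].
  exact: cobal_window_gcd_even.
exact: cobal_window_gcd_odd.
Qed.
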